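(* Every generalized Rickart $*$-ring has a unity (multiplicative identity) element.
   Context: A $*$-ring is an associative ring $R$ (not assumed to have an identity) equipped with an involution $x\mapsto x^*$, i.e. an additive map with $(xy)^*=y^*x^*$ and $x^{**}=x$. A projection is an element $e$ with $e=e^*=e^2$. For $a\in R$, $r(a)=\{b\in R: ab=0\}$. $R$ is a generalized Rickart $*$-ring if for every $x\in R$ there exist a positive integer $n$ and a projection $g\in R$ with $r(x^n)=gR$. *)

From mathcomp Require Import all_boot all_algebra.
Set Implicit Arguments. Unset Strict Implicit. Unset Printing Implicit Defensive.
Import GRing.Theory.
Local Open Scope ring_scope.

Definition is_rng (R : zmodType) (mul : R -> R -> R) : Prop :=
  [/\ forall x y z, mul x (mul y z) = mul (mul x y) z,
      forall x y z, mul x (y + z) = mul x y + mul x z &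
      forall x y z, mul (x + y) z = mul x z + mul y z].

Definition is_involution (R : zmodType) (mul : R -> R -> R) (star : R -> R) : Prop :=
  [/\ forall x y, star (x + y) = star x + star y,
      forall x y, star (mul x y) = mul (star y) (star x) &
      forall x, star (star x) = x].

Definition is_star_ring (R : zmodType) (mul : R -> R -> R) (star : R -> R) : Prop :=
  is_rng mul /\ is_involution mul star.

Definition is_projection (R : zmodType) (mul : R -> R -> R) (star : R -> R) (e : R) : Prop :=
  e = star e /\ e = mul e e.

(* positive powers: rpow x n = x^(n+1) *)
Fixpoint rpow (R : Type) (mul : R -> R -> R) (x : R) (n : nat) : R :=
  match n with
  | O => x
  | S k => mul x (rpow mul x k)
  end.

Definition rann (R : zmodType) (mul : R -> R -> R) (a : R) : R -> Prop :=
  fun b => mul a b = 0.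

(* principal right ideal gR = {g r | r in R} (no unity, so g itself need not lie in it a priori) *)
Definition rprinc (R : Type) (mul : R -> R -> R) (g : R) : R -> Prop :=
  fun b => exists r, b = mul g r.

Definition gen_rickart (R : zmodType) (mul : R -> R -> R) (star : R -> R) : Prop :=
  is_star_ring mul star /\
  forall x : R, exists (n : nat) (g : R),
    (0 < n)%N /\ is_projection mul star g /\
    (forall b, rann mul (rpow mul x n.-1) b <-> rprinc mul g b).

Definition has_unity (R : zmodType) (mul : R -> R -> R) : Prop :=
  exists u : R, forall x, mul u x = x /\ mul x u = x.

From mathcomp Require Import all_boot all_algebra.
Set Implicit Arguments. Unset Strict Implicit. Unset Printing Implicit Defensive.
Import GRing.Theory.
Local Open Scope ring_scope.

(* Taking x = 0 in the definition gives R = r(0^n) = gR for a projection g;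
   an idempotent generating R as a right ideal is a left unity, and applying
   the involution to x* = g x* shows that the self-adjoint g is also a right
   unity. *)

Section Rng.

Variables (R : zmodType) (mul : R -> R -> R).
Hypothesis mul_rng : is_rng mul.

Lemma rng_mul0r (y : R) : mul 0 y = 0.
Proof.
have [_ _ mulDl] := mul_rng.
by apply: (addrI (mul 0 y)); rewrite -mulDl !addr0.
Qed.

Lemma rpow0 (k : nat) : rpow mul 0 k = 0.
Proof. by case: k => [|k] //=; rewrite rng_mul0r. Qed.

Lemma rann_rpow0 (k : nat) (b : R) : rann mul (rpow mul 0 k) b.
Proof. by rewrite /rann rpow0 rng_mul0r. Qed.

Lemma idempotent_generator_left_unit (g : R) :
  g = mul g g -> (forall b, rprinc mul g b) -> forall b, mul g b = b.
Proof.
have [mulA _ _] := mul_rng.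
by move=> gg gR b; have [r ->] := gR b; rewrite mulA -gg.
Qed.

End Rng.

Lemma selfadjoint_left_unit_right_unit (R : zmodType) (mul : R -> R -> R)
    (star : R -> R) (g : R) :
  is_involution mul star -> g = star g -> (forall b, mul g b = b) ->
  forall x, mul x g = x.
Proof.
move=> [_ starM starK] gs gleft x.
by rewrite -[x]starK -{2}(gleft (star x)) starM -gs.
Qed.

Theorem mainTheorem1 (R : zmodType) (mul : R -> R -> R) (star : R -> R) :
  gen_rickart mul star -> has_unity mul.
Proof.
move=> [[mul_rng star_inv] rickart].
have [n [g [_ [[gs gg] rann0_gR]]]] := rickart 0.
have gleft : forall b, mul g b = b.
  apply: (idempotent_generator_left_unit mul_rng gg) => b.
  exact/rann0_gR/rann_rpow0.
exists g => x; split; first exact: gleft.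
exact: (selfadjoint_left_unit_right_unit star_inv gs gleft).
Qed.
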